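(* Let $A=\langle a,b\mid\ \rangle$ and $B=\langle c,d\mid\ \rangle$ be free groups of rank two, let $C\le A$ be the subgroup generated by $\{a,\ a^{b^2}(a^b)^{-1}a\}$ and $D\le B$ the subgroup generated by $\{c^{-1},\ c^{d^2}(c^d)^{-1}c\}$. Then $C$ is relatively torsion-free in $A$ and $D$ is relatively torsion-free in $B$.
   Context: Notation $x^y=y^{-1}xy$. A subgroup $H\le K$ is relatively torsion-free if $gh_1gh_2\cdots gh_k\ne1$ for all $g\in K\setminus H$, $k\ge1$, $h_i\in H$. *)

From mathcomp Require Import all_boot.
Set Implicit Arguments. Unset Strict Implicit. Unset Printing Implicit Defensive.

(* A letter: (generator, inverted?).  generator false = first generator
   (a resp. c), true = second generator (b resp. d). *)
Definition letter := (bool * bool)%type.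
Definition flip (x : letter) : letter := (x.1, ~~ x.2).

Fixpoint reduced (w : seq letter) : bool :=
  match w with
  | x :: ((y :: _) as t) => (y != flip x) && reduced t
  | _ => true
  end.

Definition push (x : letter) (w : seq letter) : seq letter :=
  match w with
  | y :: t => if y == flip x then t else x :: w
  | [::] => [:: x]
  end.

Lemma reduced_tail x w : reduced (x :: w) -> reduced w.
Proof. by case: w => //= y t /andP[]. Qed.

Lemma push_reduced x w : reduced w -> reduced (push x w).
Proof.
case: w => [|y t] //= Hw; case: ifP => Hy /=; first exact: reduced_tail Hw.
by rewrite Hy Hw.
Qed.

Definition FG2 := {w : seq letter | reduced w}.

Lemma foldr_push_reduced (u v : seq letter) :
  reduced v -> reduced (foldr push v u).
Proof. by elim: u => //= x u IH Hv; apply: push_reduced; apply: IH. Qed.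

Lemma foldl_push_reduced (u acc : seq letter) :
  reduced acc -> reduced (foldl (fun a x => push (flip x) a) acc u).
Proof.
by elim: u acc => //= x u IH acc Hacc; apply: IH; apply: push_reduced.
Qed.

Definition fg_one : FG2 := exist _ [::] isT.
Definition fg_mul (u v : FG2) : FG2 :=
  exist _ (foldr push (sval v) (sval u)) (foldr_push_reduced (sval u) (svalP v)).
Definition fg_inv (u : FG2) : FG2 :=
  exist _ (foldl (fun a x => push (flip x) a) [::] (sval u))
        (foldl_push_reduced (sval u) (isT : reduced [::])).
Definition fg_conj (x y : FG2) : FG2 := fg_mul (fg_inv y) (fg_mul x y).

Definition fg_gen1 : FG2 := exist _ [:: (false, false)] isT.
Definition fg_gen2 : FG2 := exist _ [:: (true, false)] isT.

Inductive gen_sub (S : FG2 -> Prop) : FG2 -> Prop :=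
  | gen_one : gen_sub S fg_one
  | gen_mul s w : S s -> gen_sub S w -> gen_sub S (fg_mul s w)
  | gen_mulV s w : S s -> gen_sub S w -> gen_sub S (fg_mul (fg_inv s) w).

Definition alt_prod (g : FG2) (hs : seq FG2) : FG2 :=
  foldr (fun h acc => fg_mul g (fg_mul h acc)) fg_one hs.

Definition rel_torsion_free (H : FG2 -> Prop) : Prop :=
  forall g : FG2, ~ H g ->
  forall hs : seq FG2, 0 < size hs -> (forall i, i < size hs -> H (nth fg_one hs i)) ->
  alt_prod g hs <> fg_one.

(* Let K be the kernel of the map A -> Z counting the exponent of b.  By
   Reidemeister-Schreier, K is free on x_m = b^m a b^-m (m in Z), and since
   y = a^(b^2) (a^b)^-1 a = x_-2 x_-1^-1 x_0, replacing x_-2 by y gives another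
   basis of K, in which C = <x_0, y> is generated by two basis elements: C is a
   free factor of K.  If g is not in K, then g h_1 ... g h_k has nonzero
   b-exponent.  If g is in K \ C, write it in the basis of K as p g' q with p, q
   in C and g' a reduced word whose first and last letters lie outside the
   factor; the product is conjugate to g' h'_1 ... g' h'_k with h'_i = q h_i p
   in C, which reduces to a power of g' followed by a word starting inside the
   factor, hence is nontrivial.  D is the same subgroup as C. *)
From mathcomp Require Import all_boot ssralg ssrnum ssrint zify.
Set Implicit Arguments. Unset Strict Implicit. Unset Printing Implicit Defensive.

Section FreeReduction.
Variable T : eqType.
Local Notation sym := (T * bool)%type.
Implicit Types (x y : sym) (u v w Y : seq sym).

Definition linv x : sym := (x.1, ~~ x.2).

Lemma linvK : involutive linv. Proof. by case=> ? []. Qed.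

Lemma eq_linv x y : (x == linv y) = (linv x == y).
Proof. by rewrite -(inj_eq (can_inj linvK)) linvK. Qed.

Lemma linv_neq x : (x == linv x) = false.
Proof. by case: x => ? []; rewrite /linv /= xpair_eqE eqxx. Qed.

Fixpoint is_reduced w : bool :=
  match w with x :: ((y :: _) as t) => (y != linv x) && is_reduced t | _ => true end.

Definition cons_red x w :=
  match w with y :: t => if y == linv x then t else x :: w | [::] => [:: x] end.

Definition red w := foldr cons_red [::] w.
Arguments red : simpl never.

Lemma red_cons x w : red (x :: w) = cons_red x (red w). Proof. by []. Qed.

Definition winv w := rev (map linv w).

Lemma is_reduced_behead x w : is_reduced (x :: w) -> is_reduced w.
Proof. by case: w => //= y t /andP[]. Qed.

Lemma is_reduced_cons_red x w : is_reduced w -> is_reduced (cons_red x w).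
Proof.
case: w => [|y t] //= rw; case: ifP => yx /=; first exact: is_reduced_behead rw.
by rewrite yx rw.
Qed.

Lemma is_reduced_foldr u w : is_reduced w -> is_reduced (foldr cons_red w u).
Proof. by elim: u => //= x u IH rw; apply/is_reduced_cons_red/IH. Qed.

Lemma is_reduced_red w : is_reduced (red w). Proof. exact: is_reduced_foldr. Qed.

Lemma red_id w : is_reduced w -> red w = w.
Proof.
elim: w => // x w IH rw; rewrite red_cons IH ?(is_reduced_behead rw) //.
by case: w rw {IH} => //= y t /andP[/negbTE -> _].
Qed.

Lemma red_red w : red (red w) = red w.
Proof. exact/red_id/is_reduced_red. Qed.

Lemma cons_redK x w : is_reduced w -> cons_red x (cons_red (linv x) w) = w.
Proof.
case: w => [|y t] /=; first by rewrite eqxx.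
rewrite linvK; case: eqP => [-> | ne] rw; last by rewrite /= eqxx.
by case: t rw => //= z t /andP[/negbTE -> _].
Qed.

Lemma red_cat u v : red (u ++ v) = foldr cons_red (red v) u.
Proof. by rewrite /red foldr_cat. Qed.

Lemma red_catr u v : red (u ++ red v) = red (u ++ v).
Proof. by rewrite !red_cat red_red. Qed.

Lemma foldr_cons_red_red w u :
  is_reduced w -> foldr cons_red w u = foldr cons_red w (red u).
Proof.
move=> rw; elim: u => //= x u ->; rewrite red_cons.
have: is_reduced (red u) by exact: is_reduced_red.
case: (red u) => [|y r] //= rr; case: ifP => //= /eqP ->.
by rewrite cons_redK // is_reduced_foldr // (is_reduced_behead rr).
Qed.

Lemma red_catl u v : red (red u ++ v) = red (u ++ v).
Proof. by rewrite !red_cat -foldr_cons_red_red // is_reduced_red. Qed.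

Lemma red_cat_congr u u' v v' :
  red u = red u' -> red v = red v' -> red (u ++ v) = red (u' ++ v').
Proof. by move=> Eu Ev; rewrite -red_catl Eu red_catl -red_catr Ev red_catr. Qed.

Lemma red_cancel u x v : red (u ++ x :: linv x :: v) = red (u ++ v).
Proof. by rewrite !red_cat !red_cons cons_redK // is_reduced_red. Qed.

Lemma winvK : involutive winv.
Proof. by move=> w; rewrite /winv map_rev revK (mapK linvK). Qed.

Lemma winv_cat u v : winv (u ++ v) = winv v ++ winv u.
Proof. by rewrite /winv map_cat rev_cat. Qed.

Lemma red_cat_winv w : red (w ++ winv w) = [::].
Proof.
elim: w => // x w IH.
rewrite /winv map_cons rev_cons -cats1 -/(winv w) catA cat_cons -red_catl red_cons IH /=.
by rewrite !red_cons cons_redK.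
Qed.

Lemma red_winv_cat w : red (winv w ++ w) = [::].
Proof. by rewrite -{2}(winvK w) red_cat_winv. Qed.

Lemma red_cat_winv_mid u w v : red (u ++ w ++ winv w ++ v) = red (u ++ v).
Proof.
by rewrite -red_catr catA -(red_catl (w ++ _)) red_cat_winv red_catr.
Qed.

Lemma red_cat_eq_red u v : red (u ++ v) = red u -> red v = [::].
Proof.
move=> E; have -> : red v = red (winv u ++ u ++ v).
  by rewrite catA -red_catl red_winv_cat.
by rewrite -red_catr E red_catr red_winv_cat.
Qed.

Lemma all_red (P : pred sym) w : all P w -> all P (red w).
Proof.
elim: w => // x w IH /andP[Px /IH]; rewrite red_cons.
case: (red w) => [|y t] /=; first by rewrite Px.
by move=> /andP[Py Pt]; case: ifP => _ //=; rewrite Px Py Pt.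
Qed.

Definition nocancel u v :=
  if u is x :: u' then (if v is y :: _ then y != linv (last x u') else true) else true.

Lemma reduced_cat u v :
  is_reduced (u ++ v) = [&& is_reduced u, is_reduced v & nocancel u v].
Proof.
elim: u => [|x u IH]; first by rewrite /= andbT.
case: u IH => [|z u] IH; first by case: v {IH} => [|y t] //=; rewrite andbC.
have -> : is_reduced (x :: (z :: u) ++ v) = (z != linv x) && is_reduced ((z :: u) ++ v)
  by [].
by rewrite IH /= !andbA.
Qed.

Fixpoint wpow Y n := if n is n'.+1 then Y ++ wpow Y n' else [::].

Lemma last_wpow x Y n : last x (Y ++ wpow (x :: Y) n) = last x Y.
Proof. by elim: n => [|n IH] /=; rewrite ?cats0 // last_cat /= IH. Qed.

Lemma red_wpow_conj s Y n :
  red (wpow (s ++ Y ++ winv s) n) = red (s ++ wpow Y n ++ winv s).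
Proof.
elim: n => [|n IH] /=; first by rewrite red_cat_winv.
rewrite -red_catr IH red_catr -!catA.
have := red_cat_winv_mid (s ++ Y) (winv s) (wpow Y n ++ winv s).
by rewrite winvK -!catA.
Qed.

Lemma is_reduced_wpow x Y n :
  is_reduced (x :: Y) -> last x Y != linv x -> is_reduced (wpow (x :: Y) n).
Proof.
move=> rY lY; elim: n => // n IH.
change (is_reduced ((x :: Y) ++ wpow (x :: Y) n)).
rewrite reduced_cat rY IH; case: n {IH} => //= n.
by rewrite eq_linv eq_sym.
Qed.

Lemma red_wpow_head_last x Y n : is_reduced (x :: Y) ->
  exists Z, red (wpow (x :: Y) n.+1) = x :: Z /\ last x Z = last x Y.
Proof.
have [m] := ubnP (size Y); elim: m x Y => // m IH x Y szY rY.
have [lY|lY] := eqVneq (last x Y) (linv x); last first.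
  exists (Y ++ wpow (x :: Y) n); rewrite last_wpow red_id //.
  exact: is_reduced_wpow.
case/lastP: Y szY rY lY => [|Y' z] szY rY; first by move=> /eqP; rewrite linv_neq.
rewrite last_rcons => Ez; subst z.
case: Y' szY rY => [|x2 Y2] szY rY; first by rewrite /= eqxx in rY.
have conj : x :: rcons (x2 :: Y2) (linv x) = [:: x] ++ (x2 :: Y2) ++ winv [:: x].
  by rewrite -cats1.
rewrite -cats1 -cat_cons reduced_cat in rY.
case/and3P: rY => /andP[x2x r2] _.
rewrite [nocancel _ _]/= (inj_eq (can_inj linvK)) => l2.
have [|Z2 [EZ2 LZ2]] := IH x2 Y2 _ r2.
  by move: szY; rewrite size_rcons /= !ltnS; apply: leq_trans.
exists (rcons (x2 :: Z2) (linv x)); rewrite !last_rcons; split => //.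
rewrite conj red_wpow_conj -(red_catr [:: x]) -(red_catl (wpow _ _)) EZ2 red_catr.
rewrite (_ : _ ++ _ ++ _ = x :: rcons (x2 :: Z2) (linv x)); last first.
  by rewrite /winv /= -cats1.
have rZ2 : is_reduced (x2 :: Z2) by rewrite -EZ2 is_reduced_red.
rewrite red_id // -cats1 -cat_cons reduced_cat; apply/and3P; split => //.
  by apply/andP.
by rewrite /= LZ2 (inj_eq (can_inj linvK)).
Qed.

Fixpoint alt_word Y (Hs : seq (seq sym)) :=
  if Hs is H :: Hs' then Y ++ H ++ alt_word Y Hs' else [::].

Lemma red_alt_word Y Hs : red (alt_word Y Hs) = red (alt_word (red Y) (map red Hs)).
Proof.
elim: Hs => //= H Hs IH.
by apply: red_cat_congr; rewrite ?red_red //; apply: red_cat_congr; rewrite ?red_red.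
Qed.

Lemma alt_word_rot p Y q Hs :
  alt_word (p ++ Y ++ q) Hs ++ p = p ++ alt_word Y [seq q ++ H ++ p | H <- Hs].
Proof. by elim: Hs => [|H Hs IH] /=; rewrite ?cats0 // -!catA IH. Qed.

End FreeReduction.

Arguments red [T] w : simpl never.

Section FreeFactor.
Variables (T : eqType) (J : pred T).
Local Notation sym := (T * bool)%type.
Implicit Types (x y : sym) (w Y : seq sym).

Definition in_factor x := J x.1.

Lemma factor_nocancel x y :
  in_factor x -> ~~ in_factor y -> (y != linv x) && (x != linv y).
Proof.
rewrite /in_factor => Jx Jy; apply/andP; split; apply/eqP => E.
  by move: Jy; rewrite E /= Jx.
by move: Jx; rewrite E /= (negbTE Jy).
Qed.

Section CoreWord.
Variables (x : sym) (Y : seq sym).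
Hypotheses (rY : is_reduced (x :: Y)) (Jx : ~~ in_factor x).
Hypothesis Jl : ~~ in_factor (last x Y).

Definition pow_headed W :=
  exists n t, W = red (wpow (x :: Y) n.+1) ++ t /\ all in_factor (take 1 t).

Lemma pow_headedP W : pow_headed W -> exists W', W = x :: W'.
Proof.
case=> n [t [-> _]]; have [Z [-> _]] := red_wpow_head_last n rY.
by exists (Z ++ t).
Qed.

Lemma pow_headed_cons H W : all in_factor H -> is_reduced W ->
  W = [::] \/ pow_headed W -> pow_headed (red ((x :: Y) ++ H ++ W)).
Proof.
move=> JH rW hW; rewrite /pow_headed -red_catr -(red_catl H) red_catr.
have := all_red JH; have := is_reduced_red H.
case: (red H) => [|y RH] rH JrH; rewrite ?cat0s.
  case: hW => [->|[n [t [EW Jt]]]].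
    by exists 0, [::]; rewrite /= !cats0 red_id.
  have [Z [EZ LZ]] := red_wpow_head_last n.+1 rY.
  exists n.+1, t; split => //.
  rewrite EW catA -(red_catl (_ ++ red _)) red_catr.
  change ((x :: Y) ++ wpow (x :: Y) n.+1) with (wpow (x :: Y) n.+2).
  rewrite EZ red_id // reduced_cat -EZ is_reduced_red.
  move: rW; rewrite EW reduced_cat => /and3P[_ -> _].
  rewrite EZ; case: t {EW} Jt => // y t; rewrite /= LZ => /andP[Jy _].
  by case/andP: (factor_nocancel Jy Jl).
case/andP: (JrH) => Jy _.
exists 0, (y :: RH ++ W); split; last by rewrite /= Jy take0.
have -> : red (wpow (x :: Y) 1) = x :: Y by rewrite /= cats0 red_id.
rewrite red_id // reduced_cat rY reduced_cat rH rW /=.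
case/andP: (factor_nocancel Jy Jl) => _ ->; rewrite andbT.
case: hW => [->|/pow_headedP[W' ->]] //.
have JlR : in_factor (last y RH) by apply: (allP JrH); exact: mem_last.
by case/andP: (factor_nocancel JlR Jx).
Qed.

Lemma pow_headed_alt_word Hs : all (all in_factor) Hs -> Hs != [::] ->
  pow_headed (red (alt_word (x :: Y) Hs)).
Proof.
elim: Hs => //= H Hs IH /andP[JH JHs] _.
have -> : red ((x :: Y) ++ H ++ alt_word (x :: Y) Hs) =
          red ((x :: Y) ++ H ++ red (alt_word (x :: Y) Hs)).
  by apply: red_cat_congr => //; apply: red_cat_congr; rewrite ?red_red.
apply: pow_headed_cons; rewrite ?is_reduced_red //.
by case: Hs IH JHs => [|H' Hs] IH JHs; [left | right; apply: IH].
Qed.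

End CoreWord.

Lemma split_first_outside w : ~~ all in_factor w ->
  exists p x r, [/\ w = p ++ x :: r, all in_factor p & ~~ in_factor x].
Proof.
elim: w => //= y w IH; case Jy: (in_factor y) => /= nJ.
  by have [p [x [r [-> Jp Jx]]]] := IH nJ; exists (y :: p), x, r; rewrite /= Jy.
by exists [::], y, w; rewrite Jy.
Qed.

Lemma split_factor_ends w : ~~ all in_factor w -> exists p x Y q,
  [/\ w = p ++ (x :: Y) ++ q, all in_factor p, all in_factor q,
      ~~ in_factor x & ~~ in_factor (last x Y)].
Proof.
move=> /split_first_outside [p [x [r [-> Jp Jx]]]].
have : ~~ all in_factor (rev (x :: r)) by rewrite all_rev /= negb_and Jx.
move=> /split_first_outside [p' [z [r' [Er Jp' Jz]]]].
have Exr : x :: r = rcons (rev r') z ++ rev p'.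
  by rewrite -(revK (x :: r)) Er rev_cat rev_cons.
case Ez: (rcons (rev r') z) Exr => [|x' Y] Exr; first by case: (rev r') Ez.
case: Exr => ex' er; subst x'.
exists p, x, Y, (rev p'); split; rewrite ?all_rev ?er //.
by have := congr1 (last x) Ez; rewrite last_rcons /= => <-.
Qed.

Lemma red_alt_word_neq0 g Hs : is_reduced g -> ~~ all in_factor g ->
  all (all in_factor) Hs -> Hs != [::] -> red (alt_word g Hs) != [::].
Proof.
move=> rg /split_factor_ends [p [x [Y [q [Eg Jp Jq Jx Jl]]]]] JHs nHs.
have rY : is_reduced (x :: Y).
  by move: rg; rewrite Eg !reduced_cat => /and3P[_ /and3P[]].
have JHs' : all (all in_factor) [seq q ++ H ++ p | H <- Hs].
  apply/allP => _ /mapP[H HH ->]; rewrite !all_cat Jq Jp andbT.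
  exact: (allP JHs).
have nHs' : [seq q ++ H ++ p | H <- Hs] != [::] by case: (Hs) nHs.
have [W' EW] := pow_headedP rY (pow_headed_alt_word rY Jx Jl JHs' nHs').
apply/eqP => E0.
have : red (p ++ alt_word (x :: Y) [seq q ++ H ++ p | H <- Hs]) = red p.
  by rewrite -alt_word_rot -red_catl -Eg E0.
by move/red_cat_eq_red; rewrite EW.
Qed.

End FreeFactor.

Lemma fg_ext (u v : FG2) : sval u = sval v -> u = v.
Proof.
case: u v => [u ru] [v rv] /= E; subst v.
by rewrite (bool_irrelevance ru rv).
Qed.

Lemma fg_mulE u v : sval (fg_mul u v) = red (sval u ++ sval v).
Proof. by rewrite /= red_cat (red_id (svalP v : is_reduced (sval v))). Qed.

Lemma fg_mulA : associative fg_mul.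
Proof. by move=> u v w; apply: fg_ext; rewrite !fg_mulE red_catr red_catl catA. Qed.

Lemma fg_mul1g : left_id fg_one fg_mul.
Proof. by move=> v; apply: fg_ext; rewrite fg_mulE red_id //; exact: (svalP v). Qed.

Lemma fg_mulg1 : right_id fg_one fg_mul.
Proof.
by move=> v; apply: fg_ext; rewrite fg_mulE cats0 red_id //; exact: (svalP v).
Qed.

Definition fg_word (w : seq letter) : FG2 := exist _ (red w) (is_reduced_red w).

Lemma fg_word_cat u v : fg_word (u ++ v) = fg_mul (fg_word u) (fg_word v).
Proof. by apply: fg_ext; rewrite fg_mulE /= red_catl red_catr. Qed.

Lemma fg_word_red w : fg_word (red w) = fg_word w.
Proof. by apply: fg_ext; rewrite /= red_red. Qed.

Lemma fg_wordK g : fg_word (sval g) = g.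
Proof. by apply: fg_ext; rewrite /= red_id //; exact: (svalP g). Qed.

Lemma alt_prodE g hs : sval (alt_prod g hs) = red (alt_word (sval g) (map sval hs)).
Proof.
elim: hs => [|h hs IH] //; rewrite [alt_prod _ _]/= !fg_mulE IH.
by apply: red_cat_congr; rewrite // red_red red_catr.
Qed.

Section GeneratedSubgroup.
Variable S : FG2 -> Prop.

Lemma gen_sub_mul u v : gen_sub S u -> gen_sub S v -> gen_sub S (fg_mul u v).
Proof.
elim=> [|s w Ss _ IH|s w Ss _ IH] Gv; rewrite ?fg_mul1g // -fg_mulA.
  exact: gen_mul Ss (IH Gv).
exact: gen_mulV Ss (IH Gv).
Qed.

Lemma gen_sub_gen s : S s -> gen_sub S s.
Proof. by move=> Ss; rewrite -[s]fg_mulg1; exact: gen_mul Ss (gen_one S). Qed.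

Lemma gen_sub_genV s : S s -> gen_sub S (fg_inv s).
Proof. by move=> Ss; rewrite -[fg_inv s]fg_mulg1; exact: gen_mulV Ss (gen_one S). Qed.

End GeneratedSubgroup.

Import GRing.Theory Num.Theory.
Local Open Scope ring_scope.

Definition letter_sign (e : bool) : int := if e then -1 else 1.

Fixpoint height (w : seq letter) : int :=
  if w is x :: w' then (if x.1 then letter_sign x.2 else 0) + height w' else 0.

Definition bpow (h : int) : seq letter :=
  match h with Posz n => nseq n (true, false) | Negz n => nseq n.+1 (true, true) end.

Definition y_word : seq letter :=
  [:: (true, true); (true, true); (false, false); (true, false);
      (false, true); (true, false); (false, false)].

(* A letter (m, e) of a word over [int * bool] stands for x_m = b^m a b^-m,
   inverted if e, except that (-2, e) stands for y = y_word = x_-2 x_-1^-1 x_0;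
   these form a basis of the kernel of [height].  [rs_word h w] rewrites w, read
   from height h, in that basis. *)
Definition rs_letter (h : int) (e : bool) : seq (int * bool) :=
  if h == -2 then
    if e then [:: (-1, true); (0, false); (-2, true)]
    else [:: (-2, false); (0, true); (-1, false)]
  else [:: (h, e)].

Fixpoint rs_word (h : int) (w : seq letter) : seq (int * bool) :=
  if w is x :: w' then
    if x.1 then rs_word (h + letter_sign x.2) w' else rs_letter h x.2 ++ rs_word h w'
  else [::].

Definition basis_word (l : int * bool) : seq letter :=
  if l.1 == -2 then (if l.2 then winv y_word else y_word)
  else bpow l.1 ++ (false, l.2) :: bpow (- l.1).

Definition basis_expand (v : seq (int * bool)) : seq letter :=
  flatten (map basis_word v).

Lemma letter_signN e : letter_sign e + letter_sign (~~ e) = 0.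
Proof. by case: e. Qed.

Lemma height_cat u v : height (u ++ v) = height u + height v.
Proof. by elim: u => [|x u IH] /=; rewrite ?add0r // IH addrA. Qed.

Lemma height_red w : height (red w) = height w.
Proof.
elim: w => // x w IH; rewrite red_cons /= -IH.
case: (red w) => [|y r] //=; case: eqP => //= ->.
case: x => [[] e] /=; last by rewrite !add0r.
by rewrite addrA letter_signN add0r.
Qed.

Lemma rs_word_cat h u v :
  rs_word h (u ++ v) = rs_word h u ++ rs_word (h + height u) v.
Proof.
elim: u h => [|x u IH] h /=; first by rewrite addr0.
case: ifP => _; first by rewrite IH addrA.
by rewrite IH add0r catA.
Qed.

Lemma rs_letter_negb h e : rs_letter h (~~ e) = winv (rs_letter h e).
Proof. by rewrite /rs_letter; case: eqP => _; case: e. Qed.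

Lemma rs_word_red h w : red (rs_word h (red w)) = red (rs_word h w).
Proof.
elim: w h => // x w IH h; rewrite red_cons -[x :: w]cat1s rs_word_cat.
rewrite -red_catr -IH red_catr -rs_word_cat cat1s.
case: (red w) => [|y r] //=; case: eqP => //= ->.
case: x => [[] e] /=; first by rewrite -addrA letter_signN addr0.
by rewrite rs_letter_negb -(cat0s (rs_letter h e ++ _)) red_cat_winv_mid.
Qed.

Lemma winv_nseq n (x : letter) : winv (nseq n x) = nseq n (linv x).
Proof. by rewrite /winv map_nseq rev_nseq. Qed.

Lemma bpow_winv h : winv (bpow h) = bpow (- h).
Proof. by case: h => [[|n]|n] //; rewrite winv_nseq. Qed.

Lemma nseqSr n (x : letter) : nseq n.+1 x = nseq n x ++ [:: x].
Proof. by elim: n => //= n <-. Qed.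

Lemma red_bpowD h e : red (bpow (h + letter_sign e)) = red (bpow h ++ [:: (true, e)]).
Proof.
case: e; rewrite /letter_sign.
- case: h => [[|n]|n].
  + by have -> : Posz 0 + -1 = Negz 0 by lia.
  + have -> : Posz n.+1 + -1 = Posz n by lia.
    change (red (nseq n (true, false)) =
            red (nseq n.+1 (true, false) ++ [:: (true, true)])).
    by rewrite nseqSr -catA cat1s (red_cancel _ (true, false) [::]) cats0.
  + have -> : Negz n + -1 = Negz n.+1 by lia.
    by rewrite /bpow -nseqSr.
- case: h => [n|[|n]].
  + have -> : Posz n + 1 = Posz n.+1 by lia.
    by rewrite /bpow -nseqSr.
  + by have -> : Negz 0 + 1 = 0 by lia.
  + have -> : Negz n.+1 + 1 = Negz n by lia.
    change (red (nseq n.+1 (true, true)) =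
            red (nseq n.+2 (true, true) ++ [:: (true, false)])).
    by rewrite (nseqSr n.+1) -catA cat1s (red_cancel _ (true, true) [::]) cats0.
Qed.

Lemma basis_expand_cat u v : basis_expand (u ++ v) = basis_expand u ++ basis_expand v.
Proof. by rewrite /basis_expand map_cat flatten_cat. Qed.

Lemma basis_word_linv l : basis_word (linv l) = winv (basis_word l).
Proof.
case: l => m e; rewrite /basis_word /=.
case: eqP => _; first by case: e; rewrite ?winvK.
rewrite winv_cat /winv /= rev_cons -/(winv (bpow (- m))) bpow_winv opprK.
by rewrite -/(winv (bpow m)) bpow_winv -cats1 -catA.
Qed.

Lemma basis_expand_red v : red (basis_expand (red v)) = red (basis_expand v).
Proof.
elim: v => // l v IH; rewrite red_cons -[l :: v]cat1s basis_expand_cat.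
rewrite -red_catr -IH red_catr -basis_expand_cat cat1s.
case: (red v) => [|l' r] //=; case: eqP => //= ->.
rewrite /basis_expand /= -/(basis_expand r) basis_word_linv.
by rewrite -(cat0s (basis_word l ++ _)) red_cat_winv_mid.
Qed.

Lemma basis_expand_rs_letter h e :
  red (basis_expand (rs_letter h e)) = red (bpow h ++ (false, e) :: bpow (- h)).
Proof.
rewrite /rs_letter; case: eqP => [->|h2]; first by case: e; vm_compute.
by rewrite /basis_expand /= cats0 /basis_word /=; case: eqP.
Qed.

Lemma basis_expand_rs_word h u :
  red (basis_expand (rs_word h u)) = red (bpow h ++ u ++ bpow (- (h + height u))).
Proof.
elim: u h => [|x u IH] h /=; first by rewrite addr0 -bpow_winv red_cat_winv.
case: x => [[] e] /=.
  by rewrite IH addrA -red_catl red_bpowD red_catl -catA.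
rewrite basis_expand_cat -red_catr IH red_catr -red_catl basis_expand_rs_letter.
rewrite red_catl add0r -catA cat_cons -bpow_winv.
have := red_cat_winv_mid (bpow h ++ [:: (false, e)]) (winv (bpow h))
  (u ++ bpow (- (h + height u))).
by rewrite winvK -!catA; apply.
Qed.

Definition factor_index (m : int) := (m == 0) || (m == -2).

Notation in_factorC := (in_factor factor_index).

Definition in_C (g : FG2) : bool :=
  (height (sval g) == 0) && all in_factorC (red (rs_word 0 (sval g))).

Definition fg_y : FG2 :=
  fg_mul (fg_conj fg_gen1 (fg_mul fg_gen2 fg_gen2))
         (fg_mul (fg_inv (fg_conj fg_gen1 fg_gen2)) fg_gen1).

Lemma fg_word_basis_a e :
  fg_word (basis_word (0, e)) = if e then fg_inv fg_gen1 else fg_gen1.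
Proof. by case: e; apply: fg_ext. Qed.

Lemma fg_word_basis_y e :
  fg_word (basis_word (-2, e)) = if e then fg_inv fg_y else fg_y.
Proof. by case: e; apply: fg_ext; vm_compute. Qed.

Lemma in_C_mul u v : in_C u -> in_C v -> in_C (fg_mul u v).
Proof.
case/andP=> /eqP hu Ju /andP[/eqP hv Jv].
rewrite /in_C fg_mulE height_red height_cat hu hv addr0 eqxx /=.
rewrite rs_word_red rs_word_cat hu addr0 -red_catr -red_catl.
by apply: all_red; rewrite all_cat Ju Jv.
Qed.

Lemma fg_word_basis_expand g : height (sval g) = 0 ->
  fg_word (basis_expand (red (rs_word 0 (sval g)))) = g.
Proof.
move=> hg; rewrite -fg_word_red basis_expand_red basis_expand_rs_word hg.
by rewrite addr0 oppr0 /= cats0 fg_word_red fg_wordK.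
Qed.

Section GeneratorsOfC.
Variable S : FG2 -> Prop.
Hypotheses (SC : forall s, S s -> in_C s && in_C (fg_inv s))
  (Ga : gen_sub S fg_gen1) (Gai : gen_sub S (fg_inv fg_gen1))
  (Gy : gen_sub S fg_y) (Gyi : gen_sub S (fg_inv fg_y)).

Lemma gen_sub_in_C g : gen_sub S g -> in_C g.
Proof.
elim=> [|s w /SC/andP[Cs _] _|s w /SC/andP[_ Cs] _]; last 2 first.
- exact: in_C_mul.
- exact: in_C_mul.
by [].
Qed.

Lemma gen_sub_basis_expand v :
  all in_factorC v -> gen_sub S (fg_word (basis_expand v)).
Proof.
elim: v => [_|l v IH] /=.
  by rewrite (_ : fg_word _ = fg_one); [apply: gen_one | apply: fg_ext].
case/andP=> Jl /IH Gv; rewrite -cat1s basis_expand_cat fg_word_cat.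
apply: gen_sub_mul Gv; rewrite /basis_expand /= cats0.
case: l Jl => m e; rewrite /in_factor /factor_index /= => /orP[] /eqP ->.
  by rewrite fg_word_basis_a; case: e.
by rewrite fg_word_basis_y; case: e.
Qed.

Lemma in_C_gen_sub g : in_C g -> gen_sub S g.
Proof.
by case/andP=> /eqP hg /gen_sub_basis_expand; rewrite fg_word_basis_expand.
Qed.

End GeneratorsOfC.

Lemma height_alt_word Y Hs : all (fun H => height H == 0) Hs ->
  height (alt_word Y Hs) = height Y *+ size Hs.
Proof.
elim: Hs => //= H Hs IH /andP[/eqP hH /IH hHs].
by rewrite !height_cat hH hHs add0r mulrS.
Qed.

Lemma rs_word_alt_word Y Hs : height Y = 0 -> all (fun H => height H == 0) Hs ->
  rs_word 0 (alt_word Y Hs) = alt_word (rs_word 0 Y) (map (rs_word 0) Hs).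
Proof.
move=> hY; elim: Hs => //= H Hs IH /andP[/eqP hH /IH <-].
by rewrite !rs_word_cat hY addr0 hH addr0.
Qed.

Lemma rel_torsion_free_in_C : rel_torsion_free in_C.
Proof.
move=> g Cg hs hs_gt0 Chs P1.
have {}Chs : all in_C hs.
  by apply/(all_nthP fg_one) => i; apply: Chs.
have hHs : all (fun H => height H == 0) (map sval hs).
  by rewrite all_map; apply: sub_all Chs => h /andP[].
have E0 : red (alt_word (sval g) (map sval hs)) = [::] by rewrite -alt_prodE P1.
have [hg|hg] := eqVneq (height (sval g)) 0.
  have nJ : ~~ all in_factorC (red (rs_word 0 (sval g))).
    by apply/negP => JC; apply: Cg; rewrite /in_C hg.
  have JHs : all (all in_factorC) (map (@red _) (map (rs_word 0) (map sval hs))).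
    by rewrite !all_map; apply: sub_all Chs => h /andP[].
  have nHs : map (@red _) (map (rs_word 0) (map sval hs)) != [::].
    by case: (hs) hs_gt0.
  have := red_alt_word_neq0 (is_reduced_red _) nJ JHs nHs.
  by rewrite -red_alt_word -rs_word_alt_word // -rs_word_red E0.
have := congr1 height E0; rewrite height_red height_alt_word // size_map /=.
by move/eqP; rewrite mulrn_eq0 (negbTE hg) orbF => /eqP sz; rewrite sz in hs_gt0.
Qed.

Lemma rel_torsion_free_gen_sub S :
  (forall s, S s -> in_C s && in_C (fg_inv s)) ->
  gen_sub S fg_gen1 -> gen_sub S (fg_inv fg_gen1) ->
  gen_sub S fg_y -> gen_sub S (fg_inv fg_y) ->
  rel_torsion_free (gen_sub S).
Proof.
move=> SC Ga Gai Gy Gyi g Cg hs hs_gt0 Chs.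
apply: rel_torsion_free_in_C hs_gt0 _ => [Cg'|i lt_i].
  exact/Cg/(in_C_gen_sub Ga Gai Gy Gyi).
exact: gen_sub_in_C SC _ (Chs i lt_i).
Qed.

Theorem mainTheorem19 :
  (* A = F(a,b), C = < a, a^(b^2) (a^b)^-1 a > *)
  let a := fg_gen1 in let b := fg_gen2 in
  (* B = F(c,d), D = < c^-1, c^(d^2) (c^d)^-1 c > *)
  let c := fg_gen1 in let d := fg_gen2 in
  let C := gen_sub (fun s => s = a \/
             s = fg_mul (fg_conj a (fg_mul b b)) (fg_mul (fg_inv (fg_conj a b)) a)) in
  let D := gen_sub (fun s => s = fg_inv c \/
             s = fg_mul (fg_conj c (fg_mul d d)) (fg_mul (fg_inv (fg_conj c d)) c)) in
  rel_torsion_free C /\ rel_torsion_free D.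
Proof.
move=> a b c d C D.
have invK1 : fg_inv (fg_inv fg_gen1) = fg_gen1 by apply: fg_ext.
split; apply: rel_torsion_free_gen_sub.
- by move=> s [->|->]; vm_compute.
- exact/gen_sub_gen/or_introl.
- exact/gen_sub_genV/or_introl.
- exact/gen_sub_gen/or_intror.
- exact/gen_sub_genV/or_intror.
- by move=> s [->|->]; vm_compute.
- by rewrite -invK1; apply/gen_sub_genV/or_introl.
- exact/gen_sub_gen/or_introl.
- exact/gen_sub_gen/or_intror.
- exact/gen_sub_genV/or_intror.
Qed.
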